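(* Let $\mathcal{T}\subset\mathbb{R}^3$ be a conforming tetrahedral mesh that is 4-colorable, fix a 4-coloring of its vertices with colors $A,B,C,D$, fix time-slices $s_0<s_1<\dots<s_M$, and let $\mathcal{T}'\subset\mathbb{R}^4$ be the pentatope mesh produced from $\mathcal{T}$ by extrusion-subdivision according to the subdivision rule described in the context. Then $\mathcal{T}'$ admits a consistent tagging.
   Context: A 4-coloring of a tetrahedral mesh assigns to each vertex one of four labels $A,B,C,D$ so that no two vertices joined by an edge of the mesh share a label; in particular every tetrahedron has exactly one vertex of each color. For $r\in\mathbb{R}$ and $v=(a_0,a_1,a_2)\in\mathbb{R}^3$ let $\psi_r(v)=(a_0,a_1,a_2,r)\in\mathbb{R}^4$. Extrusion-subdivision (subdivision rule): for each tetrahedron $T\in\mathcal{T}$ with vertices $v_A,v_B,v_C,v_D$ (subscript = color) and each $i\in\{0,\dots,M-1\}$, put $x_X=\psi_{s_i}(v_X)$ and $x_X'=\psi_{s_{i+1}}(v_X)$ for $X\in\{A,B,C,D\}$. The prism $\operatorname{conv}(\psi_{s_i}(T),\psi_{s_{i+1}}(T))$ is subdivided into the four pentatopes $\tau_1=\operatorname{conv}(x_A,x_B,x_C,x_D,x_D')$, $\tau_2=\operatorname{conv}(x_A,x_B,x_C,x_C',x_D')$, $\tau_3=\operatorname{conv}(x_A,x_B,x_B',x_C',x_D')$, $\tau_4=\operatorname{conv}(x_A,x_A',x_B',x_C',x_D')$. The mesh $\mathcal{T}'$ consists of all these pentatopes over all $T\in\mathcal{T}$ and all $i$. A tagged pentatope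 is an ordering $(x_0,x_1,x_2,x_3,x_4)$ of the vertices of a pentatope together with an integer type $\gamma\in\{0,1,2,3\}$, written $t=(x_0,x_1,x_2,x_3,x_4)_\gamma$. Bisection rule: bisecting $t=(x_0,\dots,x_4)_\gamma$ along its refinement edge $\overline{x_0x_4}$ gives the children $t_1=(x_0,x',x_1,x_2,x_3)_{\gamma'}$ and $t_2=(x_4,x',x_3,x_2,x_1)_{\gamma'}$ if $\gamma=0$, $t_2=(x_4,x',x_1,x_3,x_2)_{\gamma'}$ if $\gamma=1$, $t_2=(x_4,x',x_1,x_2,x_3)_{\gamma'}$ if $\gamma\in\{2,3\}$, where $x'=(x_0+x_4)/2$ and $\gamma'=(\gamma+1)\bmod 4$. Reflection: $t_R=(x_4,x_3,x_2,x_1,x_0)_\gamma$ if $\gamma=0$, $t_R=(x_4,x_1,x_3,x_2,x_0)_\gamma$ if $\gamma=1$, $t_R=(x_4,x_1,x_2,x_3,x_0)_\gamma$ if $\gamma\in\{2,3\}$. Two tagged pentatopes $t,t'$ are reflected neighbors if they share a common hyperface (3-dimensional face), have the same type, and the vertex order of $t'$ agrees with the vertex order of $t$ or of $t_R$ in all but one position. Two tagged pentatopes $t=(x_0,\dots,x_4)_\gamma$, $t'=(x_0',\dots,x_4')_\gamma$ of the same type sharing a hyperface are consistently tagged if: (1) when $\overline{x_0x_4}$ or $\overline{x_0'x_4'}$ is contained in the shared hyperface, $t$ and $t'$ are reflected neighbors; (2) otherwise, the child of $t$ and the child of $t'$ (under the bisection rule) that share the common hyperface are reflected neighbors. A consistent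 tagging of a mesh is a choice of tag for every pentatope of the mesh such that any two neighboring (hyperface-sharing) pentatopes are consistently tagged. *)

From HB Require Import structures.
From mathcomp Require Import all_boot all_order all_algebra all_fingroup.
From mathcomp Require Import reals.
Set Implicit Arguments. Unset Strict Implicit. Unset Printing Implicit Defensive.
Import Order.TTheory GRing.Theory Num.Theory.
Local Open Scope ring_scope.

Section Defs.
Variable R : realType.

Definition pt3 := 'rV[R]_3.
Definition pt4 := 'rV[R]_4.

Definition tetra := 'I_4 -> pt3.

Definition nondegenerate (K : tetra) : Prop :=
  \det (\matrix_(i < 3, j < 3) (K (lift ord0 i) 0 j - K ord0 0 j)) != 0.

Definition is_vertex (K : tetra) (p : pt3) : Prop := exists i, K i = p.

Definition in_conv (K : tetra) (x : pt3) : Prop :=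
  exists w : 'I_4 -> R, (forall i, 0 <= w i) /\ \sum_i w i = 1 /\
    x = \sum_i w i *: K i.

Definition in_conv_common (K L : tetra) (x : pt3) : Prop :=
  exists w : 'I_4 -> R, (forall i, 0 <= w i) /\ \sum_i w i = 1 /\
    (forall i, w i != 0 -> is_vertex L (K i)) /\
    x = \sum_i w i *: K i.

Definition dflt_tetra : tetra := fun _ => 0.

(* Conforming tetrahedral mesh: non-degenerate, pairwise distinct tetrahedra,
   any two of which intersect exactly in the convex hull of their common
   vertices (a common face, or the empty set). *)
Definition conforming_mesh (T : seq tetra) : Prop :=
  (forall k, (k < size T)%N -> nondegenerate (nth dflt_tetra T k)) /\
  (forall k l, (k < size T)%N -> (l < size T)%N -> k <> l ->
     let K := nth dflt_tetra T k in let L := nth dflt_tetra T l in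
     (exists i, ~ is_vertex L (K i)) /\
     (forall x, (in_conv K x /\ in_conv L x) <-> in_conv_common K L x)).

(* colors A,B,C,D are 0,1,2,3; adjacent vertices (two distinct vertices of a
   common tetrahedron) get distinct colors *)
Definition four_coloring (T : seq tetra) (col : pt3 -> 'I_4) : Prop :=
  forall k, (k < size T)%N -> let K := nth dflt_tetra T k in
    forall i j, i != j -> col (K i) != col (K j).

Definition colvert (col : pt3 -> 'I_4) (K : tetra) (X : 'I_4) : pt3 :=
  K (odflt ord0 [pick i | col (K i) == X]).

Definition psi (r : R) (v : pt3) : pt4 :=
  \row_(i < 4) (if (i : nat) == 3%N then r else v 0 (inord i)).

Definition pentatope := 'I_5 -> pt4.

Definition mk5 (a b c d e : pt4) : pentatope :=
  fun i => nth a [:: a; b; c; d; e] i.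

Definition cA : 'I_4 := inord 0.
Definition cB : 'I_4 := inord 1.
Definition cC : 'I_4 := inord 2.
Definition cD : 'I_4 := inord 3.

Definition prism_split (col : pt3 -> 'I_4) (s : nat -> R) (K : tetra) (i : nat)
  : seq pentatope :=
  let x X := psi (s i) (colvert col K X) in
  let x' X := psi (s i.+1) (colvert col K X) in
  [:: mk5 (x cA) (x cB) (x cC) (x cD) (x' cD);
      mk5 (x cA) (x cB) (x cC) (x' cC) (x' cD);
      mk5 (x cA) (x cB) (x' cB) (x' cC) (x' cD);
      mk5 (x cA) (x' cA) (x' cB) (x' cC) (x' cD)].

Definition extrude (T : seq tetra) (col : pt3 -> 'I_4) (s : nat -> R) (M : nat)
  : seq pentatope :=
  flatten [seq flatten [seq prism_split col s K i | i <- iota 0 M] | K <- T].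

(* tagged pentatope: vertex ordering (x_0,...,x_4) and type gamma *)
Definition tagged := (pentatope * nat)%type.

Definition tv (t : tagged) (i : nat) : pt4 := t.1 (inord i).

Definition bisect (t : tagged) : tagged * tagged :=
  let: (x, g) := t in
  let x0 := tv t 0 in let x1 := tv t 1 in let x2 := tv t 2 in
  let x3 := tv t 3 in let x4 := tv t 4 in
  let x' := 2^-1 *: (x0 + x4) in
  let g' := ((g + 1) %% 4)%N in
  ((mk5 x0 x' x1 x2 x3, g'),
   ((if g == 0%N then mk5 x4 x' x3 x2 x1
     else if g == 1%N then mk5 x4 x' x1 x3 x2
     else mk5 x4 x' x1 x2 x3), g')).

Definition reflection (t : tagged) : tagged :=
  let: (x, g) := t in
  let x0 := tv t 0 in let x1 := tv t 1 in let x2 := tv t 2 in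
  let x3 := tv t 3 in let x4 := tv t 4 in
  ((if g == 0%N then mk5 x4 x3 x2 x1 x0
    else if g == 1%N then mk5 x4 x1 x3 x2 x0
    else mk5 x4 x1 x2 x3 x0), g).

Definition is_vert4 (t : tagged) (p : pt4) : bool := [exists i, t.1 i == p].

Definition share_hyperface (t t' : tagged) : Prop :=
  exists i j : 'I_5,
    (forall p, (exists k, k != i /\ t.1 k = p) <-> (exists k, k != j /\ t'.1 k = p))
    /\ t.1 i <> t'.1 j.

Definition agree_but_one (x y : pentatope) : Prop :=
  exists k : 'I_5, forall i, i != k -> y i = x i.

Definition reflected_neighbors (t t' : tagged) : Prop :=
  share_hyperface t t' /\ t.2 = t'.2 /\
  (agree_but_one t.1 t'.1 \/ agree_but_one (reflection t).1 t'.1).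

(* the child of t containing the hyperface shared with t' (used when the
   refinement edge of t is not in that hyperface, so exactly one endpoint is) *)
Definition child_toward (t t' : tagged) : tagged :=
  if is_vert4 t' (tv t 0) then (bisect t).1 else (bisect t).2.

(* refinement edge of t contained in the hyperface it shares with t'
   (the shared hyperface is the set of common vertices) *)
Definition edge_in_shared (t t' : tagged) : Prop :=
  is_vert4 t' (tv t 0) /\ is_vert4 t' (tv t 4).

Definition consistently_tagged (t t' : tagged) : Prop :=
  t.2 = t'.2 /\
  ((edge_in_shared t t' \/ edge_in_shared t' t) ->
      reflected_neighbors t t') /\
  (~ (edge_in_shared t t' \/ edge_in_shared t' t) ->
      reflected_neighbors (child_toward t t') (child_toward t' t)).

Definition dflt_pent : pentatope := fun _ => 0.

Definition tag_of (P : pentatope) (t : tagged) : Prop :=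
  (exists s : 'S_5, forall i, t.1 i = P (s i)) /\ (t.2 < 4)%N.

Definition consistent_tagging (Tp : seq pentatope) : Prop :=
  exists tag : nat -> tagged,
    (forall k, (k < size Tp)%N -> tag_of (nth dflt_pent Tp k) (tag k)) /\
    (forall k l, (k < size Tp)%N -> (l < size Tp)%N ->
       share_hyperface (tag k) (tag l) -> consistently_tagged (tag k) (tag l)).

End Defs.

From Pilot Require Import Defs.
From HB Require Import structures.
From mathcomp Require Import all_boot all_order all_algebra all_fingroup.
From mathcomp Require Import reals zify.
Set Implicit Arguments. Unset Strict Implicit. Unset Printing Implicit Defensive.
Import Order.TTheory GRing.Theory Num.Theory.

(* Tag every pentatope by the vertex order in which the subdivision rule lists
   it, with type 0.  A vertex psi_(s_t)(v) of the extruded mesh determines its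
   label (t, color of v): t because s is increasing, the color because the
   coloring is proper.  If two pentatopes share a hyperface they share four
   labels, and a finite check on labels shows that either their orders differ
   in one position only, or they are tau_4 over [s_i, s_(i+1)] and tau_1 over
   [s_(i+1), s_(i+2)], whose common face A'B'C'D' fills positions 1-4 of the
   first and 0-3 of the second.  In the first case the two tags, and if needed
   their bisection children, differ in a single position; in the second no
   refinement edge is shared and the type-1 reflection of one child is the
   other child except for the new midpoint. *)

Lemma nth_flatten_lt (A : Type) (x0 : A) (ss : seq (seq A)) k :
  k < size (flatten ss) -> exists r c, [/\ r < size ss, c < size (nth [::] ss r)
    & nth x0 (flatten ss) k = nth x0 (nth [::] ss r) c].
Proof.
rewrite size_flatten => Hk.
exists (reshape_index (shape ss) k), (reshape_offset (shape ss) k).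
by rewrite -(size_map size) reshape_indexP // -nth_shape reshape_offsetP // nth_flatten.
Qed.

Lemma ord5P (k : 'I_5) :
  k = inord 0 \/ k = inord 1 \/ k = inord 2 \/ k = inord 3 \/ k = inord 4.
Proof. by rewrite -(inord_val k); case: k => [[|[|[|[|[|k]]]]] Hk] //=; tauto. Qed.

Lemma inord5_eq a b : a < 5 -> b < 5 -> ((inord a : 'I_5) == inord b) = (a == b).
Proof. by move=> Ha Hb; rewrite -val_eqE /= !inordK. Qed.

Ltac ord5_cases k := case: (ord5P k) => [E|[E|[E|[E|E]]]]; subst k.

Section TaggedPentatopes.
Local Open Scope ring_scope.
Variable R : realType.
Implicit Types (t : Defs.tagged R) (P : pentatope R).

Lemma half_scaleI (F : numFieldType) (V : lmodType F) (a b : V) :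
  2^-1 *: a = 2^-1 *: b -> a = b.
Proof. by apply: scalerI; rewrite invr_eq0 pnatr_eq0. Qed.

Lemma mk5_inord (a b c d e : pt4 R) k : (k < 5)%N ->
  mk5 a b c d e (inord k) = nth a [:: a; b; c; d; e] k.
Proof. by move=> Hk; rewrite /mk5 inordK. Qed.

Lemma is_vert4P t p : reflect (exists i, t.1 i = p) (is_vert4 t p).
Proof. by apply: (iffP existsP) => -[i /eqP]; exists i. Qed.

Lemma share_hyperface_sym t t' : share_hyperface t t' -> share_hyperface t' t.
Proof.
case=> i [j [Hface Hij]]; exists j, i; split=> [p|/esym //].
exact: iff_sym (Hface p).
Qed.

Definition reflect_ord (g : nat) (i : 'I_5) : 'I_5 :=
  inord (nth 0 (if g == 0 then [:: 4; 3; 2; 1; 0]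
                else if g == 1 then [:: 4; 1; 3; 2; 0] else [:: 4; 1; 2; 3; 0])%N i).

Lemma reflectionE t i : (reflection t).1 i = t.1 (reflect_ord t.2 i).
Proof.
case: t => x g; rewrite /reflection /reflect_ord /mk5 /=.
by case: (g == 0)%N; [|case: (g == 1)%N]; case: i => [[|[|[|[|[|?]]]]] ?].
Qed.

Lemma reflect_ordK g : involutive (reflect_ord g).
Proof.
move=> i; apply: ord_inj; rewrite /reflect_ord.
by case: (g == 0)%N; [|case: (g == 1)%N]; ord5_cases i; rewrite !inordK.
Qed.

Lemma share_hyperface_involutive t t' (f : 'I_5 -> 'I_5) (q : 'I_5) :
  involutive f -> (forall i, i != q -> t'.1 i = t.1 (f i)) ->
  t'.1 q <> t.1 (f q) -> share_hyperface t t'.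
Proof.
move=> fK Ht' Hq; exists (f q), q; split=> [p|/esym //].
split=> -[k [Hk <-]].
  have Hfk : f k != q by apply: contra_neq Hk => <-; rewrite fK.
  by exists (f k); rewrite Ht' // fK.
by exists (f k); rewrite (inj_eq (can_inj fK)) -Ht'.
Qed.

Lemma reflected_neighbors_agree t t' q : t.2 = t'.2 ->
  (forall i, i != q -> t'.1 i = t.1 i) -> t'.1 q <> t.1 q ->
  reflected_neighbors t t'.
Proof.
move=> Ht Hagree Hq; split; last by split=> //; left; exists q.
exact: (share_hyperface_involutive (f := id) (q := q)).
Qed.

Lemma reflected_neighbors_reflect t t' q : t.2 = t'.2 ->
  (forall i, i != q -> t'.1 i = (reflection t).1 i) ->
  t'.1 q <> (reflection t).1 q -> reflected_neighbors t t'.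
Proof.
move=> Ht Hagree Hq; split; last by split=> //; right; exists q.
apply: (share_hyperface_involutive (q := q) (reflect_ordK t.2)) => [i Hi|].
  by rewrite Hagree // reflectionE.
by move: Hq; rewrite reflectionE.
Qed.

Lemma agree_but_one_sym P P' : agree_but_one P P' -> agree_but_one P' P.
Proof. by case=> k Hk; exists k => i /Hk. Qed.

Lemma agree_but_one_reflection t t' : t.2 = t'.2 ->
  agree_but_one (reflection t).1 t'.1 -> agree_but_one (reflection t').1 t.1.
Proof.
move=> Ht [k Hk]; exists (reflect_ord t.2 k) => i Hi.
rewrite reflectionE -Ht Hk ?reflectionE ?reflect_ordK //.
by apply: contra_neq Hi => <-; rewrite reflect_ordK.
Qed.

Lemma reflected_neighbors_sym t t' :
  reflected_neighbors t t' -> reflected_neighbors t' t.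
Proof.
case=> Hsh [Ht Hagree]; split; first exact: share_hyperface_sym.
split=> //; case: Hagree => [|/(agree_but_one_reflection Ht)]; last by right.
by left; apply: agree_but_one_sym.
Qed.

Lemma consistently_tagged_sym t t' :
  consistently_tagged t t' -> consistently_tagged t' t.
Proof.
case=> Ht [Hedge Hchild]; split=> //; split=> H.
  by apply/reflected_neighbors_sym/Hedge; rewrite or_comm.
by apply/reflected_neighbors_sym/Hchild; rewrite or_comm.
Qed.

Lemma notin_vert4_agree P P' g (q : 'I_5) : injective P ->
  (forall r, r != q -> P' r = P r) -> P' q <> P q -> ~~ is_vert4 (P', g) (P q).
Proof.
move=> iP Hagree Hq; apply/is_vert4P => -[r /= E].
have [Erq|Nrq] := eqVneq r q; first by apply: Hq; rewrite -E Erq.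
by move: E; rewrite Hagree // => /iP Erq; rewrite Erq eqxx in Nrq.
Qed.

Lemma consistently_tagged_agree P P' g (q : 'I_5) :
  injective P -> injective P' -> (forall r, r != q -> P' r = P r) ->
  P' q <> P q -> consistently_tagged (P, g) (P', g).
Proof.
move=> iP iP' Hagree Hq.
have notvert_P' := notin_vert4_agree g iP Hagree Hq.
have notvert_P : ~~ is_vert4 (P, g) (P' q).
  by apply: notin_vert4_agree => // [r /Hagree|/esym].
have agree k : (k < 5)%N -> (inord k : 'I_5) != q -> P' (inord k) = P (inord k).
  by move=> Hk; apply: Hagree.
have vert_P' k : (k < 5)%N -> (inord k : 'I_5) != q -> is_vert4 (P', g) (P (inord k)).
  by move=> Hk Hkq; apply/is_vert4P; exists (inord k); rewrite /= agree.
split=> //; split=> [_|Hnot_shared]; first exact: (reflected_neighbors_agree (q := q)).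
(* The refinement edge is not shared, so [q] is one of its ends. *)
have [q0|q4] : q = inord 0 \/ q = inord 4.
  case: (ord5P q) => [|[|[|[|]]]] Eq; [by left| | | |by right];
  by case: Hnot_shared; left; split; apply: vert_P'; rewrite // Eq inord5_eq.
- subst q; have mid_neq : 2^-1 *: (P' (inord 0) + P' (inord 4)) <>
                          2^-1 *: (P (inord 0) + P (inord 4)).
    by rewrite (agree 4) ?inord5_eq // => /half_scaleI/addIr.
  rewrite /child_toward /tv /= (negbTE notvert_P') (negbTE notvert_P) /bisect /=.
  apply: (reflected_neighbors_agree (q := inord 1)) => // [r|]; last first.
    by case: ifP => _; [|case: ifP => _]; rewrite /= !mk5_inord.
  case: ifP => _; [|case: ifP => _]; ord5_cases r;
    by rewrite ?eqxx //= !mk5_inord //= => _; rewrite agree ?inord5_eq.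
subst q; have mid_neq : 2^-1 *: (P' (inord 0) + P' (inord 4)) <>
                        2^-1 *: (P (inord 0) + P (inord 4)).
  by rewrite (agree 0) ?inord5_eq // => /half_scaleI/addrI.
rewrite /child_toward /tv /= !vert_P' ?inord5_eq //.
have -> : is_vert4 (P, g) (P' (inord 0)).
  by apply/is_vert4P; exists (inord 0); rewrite /= agree ?inord5_eq.
rewrite /bisect /=; apply: (reflected_neighbors_agree (q := inord 1)) => // [r|].
  by ord5_cases r; rewrite ?eqxx //= !mk5_inord //= => _; rewrite agree ?inord5_eq.
by rewrite /= !mk5_inord.
Qed.

Lemma consistently_tagged_shift P P' :
  injective P -> injective P' ->
  (forall r, (r < 4)%N -> P' (inord r) = P (inord r.+1)) ->
  P' (inord 4) <> P (inord 0) ->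
  P' (inord 0) + P' (inord 4) <> P (inord 0) + P (inord 4) ->
  consistently_tagged (P, 0%N) (P', 0%N).
Proof.
move=> iP iP' Hshift Hlast Hmid.
have notvert_P' : ~~ is_vert4 (P', 0%N) (P (inord 0)).
  apply/is_vert4P => -[r /=]; ord5_cases r; [| | | |exact: Hlast];
  by rewrite Hshift // => /iP /eqP; rewrite inord5_eq.
have notvert_P : ~~ is_vert4 (P, 0%N) (P' (inord 4)).
  apply/is_vert4P => -[r /=]; ord5_cases r; [by move/esym| | | |];
  by rewrite -Hshift // => /iP' /eqP; rewrite inord5_eq.
have vert_P : is_vert4 (P, 0%N) (P' (inord 0)).
  by apply/is_vert4P; exists (inord 1); rewrite Hshift.
split=> //; split.
  by rewrite /edge_in_shared /tv /= (negbTE notvert_P') (negbTE notvert_P) => -[[]|[]].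
move=> _; rewrite /child_toward /tv /= (negbTE notvert_P') vert_P /bisect /=.
apply: (reflected_neighbors_reflect (q := inord 1)) => // [r|].
  by ord5_cases r; rewrite ?eqxx // /reflection /tv /= !mk5_inord //= => _; rewrite Hshift.
by rewrite /reflection /tv /= !mk5_inord //= => /half_scaleI.
Qed.

End TaggedPentatopes.

(* Vertex [r] of the pentatope tau_(j+1) of the prism over [s_i, s_(i+1)]:
   the primed vertices are those with [4 <= j + r]; a label is the pair
   (time index, color). *)
Definition vertex_label (i j r : nat) : nat * nat :=
  let primed := 4 <= j + r in (i + primed, r - primed).

Lemma vertex_label_inj i j r r' : j < 4 ->
  vertex_label i j r = vertex_label i j r' -> r = r'.
Proof.
rewrite /vertex_label => j4 [/addnI].
by case: leqP => Hr; case: leqP => Hr' //= _; lia.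
Qed.

Lemma vertex_label_lt i j r : j < 4 -> r < 5 ->
  (vertex_label i j r).1 <= i.+1 /\ (vertex_label i j r).2 < 4.
Proof. by rewrite /vertex_label /=; case: leqP => /= *; lia. Qed.

Lemma vertex_label_edge i j : j < 4 ->
  vertex_label i j 0 = (i, 0) /\ vertex_label i j 4 = (i.+1, 3).
Proof. by rewrite /vertex_label => j4; split; congr pair; case: leqP => /=; lia. Qed.

Lemma vertex_label_addn_eq m a b j j' r r' :
  (vertex_label (m + a) j r == vertex_label (m + b) j' r') =
  (vertex_label a j r == vertex_label b j' r').
Proof. by rewrite /vertex_label !xpair_eqE -!addnA eqn_add2l. Qed.

Definition labels_match a j b j' i0 j0 :=
  all (fun r => (r == i0) || has (fun r' => (r' != j0) &&
         (vertex_label a j r == vertex_label b j' r')) (iota 0 5)) (iota 0 5).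

Definition labels_agree a j b j' i0 :=
  all (fun r => (r == i0) || (vertex_label a j r == vertex_label b j' r)) (iota 0 5).

Definition labels_shifted a j b j' :=
  all (fun r => vertex_label a j r.+1 == vertex_label b j' r) (iota 0 4).

Definition shared_face_cases a j b j' i0 j0 :=
  [|| (i0 == j0) && labels_agree a j b j' i0,
      [&& a != b, i0 == 0, j0 == 4 & labels_shifted a j b j'] |
      [&& a != b, i0 == 4, j0 == 0 & labels_shifted b j' a j]].

Lemma shared_face_cases_check :
  all (fun a => all (fun b => all (fun j => all (fun j' => all (fun i0 => all (fun j0 =>
    labels_match a j b j' i0 j0 ==> shared_face_cases a j b j' i0 j0)
  (iota 0 5)) (iota 0 5)) (iota 0 4)) (iota 0 4)) [:: 0; 1]) [:: 0; 1].
Proof. by []. Qed.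

Lemma labels_match_addn m a b j j' i0 j0 :
  labels_match (m + a) j (m + b) j' i0 j0 = labels_match a j b j' i0 j0.
Proof.
apply: eq_all => r; congr (_ || _).
by apply: eq_has => r'; rewrite vertex_label_addn_eq.
Qed.

Lemma shared_face_cases_addn m a b j j' i0 j0 :
  shared_face_cases (m + a) j (m + b) j' i0 j0 = shared_face_cases a j b j' i0 j0.
Proof.
have agree : labels_agree (m + a) j (m + b) j' i0 = labels_agree a j b j' i0.
  by apply: eq_all => r; rewrite vertex_label_addn_eq.
have shifted c k d k' : labels_shifted (m + c) k (m + d) k' = labels_shifted c k d k'.
  by apply: eq_all => r; rewrite vertex_label_addn_eq.
by rewrite /shared_face_cases agree !shifted eqn_add2l.
Qed.

Lemma labels_match_cases i j i' j' i0 j0 : j < 4 -> j' < 4 -> i0 < 5 -> j0 < 5 ->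
  labels_match i j i' j' i0 j0 -> shared_face_cases i j i' j' i0 j0.
Proof.
move=> j4 j'4 i05 j05 Hmatch.
(* Prisms sharing a vertex lie at equal or adjacent levels, which the shift
   invariance of labels moves to levels 0 and 1. *)
have [m [a [b [a1 b1 Ei Ei']]]] : exists m a b, [/\ a <= 1, b <= 1, i = m + a & i' = m + b].
  have [r r5 ri0] : exists2 r, r \in iota 0 5 & r != i0.
    by case: (eqVneq i0 0) => [->|i0n0]; [exists 1 | exists 0; rewrite // eq_sym].
  have /orP [/eqP Er|/hasP [r' _ /andP [_ /eqP [Et _]]]] := allP Hmatch r r5.
    by rewrite Er eqxx in ri0.
  exists (minn i i'), (i - minn i i'), (i' - minn i i').
  by move: Et; case: (4 <= j + r); case: (4 <= j' + r') => /= *; split; lia.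
subst i i'; rewrite shared_face_cases_addn; rewrite labels_match_addn in Hmatch.
have mem01 c : c <= 1 -> c \in [:: 0; 1] by case: c => [|[]].
have memi n k : k < n -> k \in iota 0 n by rewrite mem_iota.
move: shared_face_cases_check => /allP/(_ _ (mem01 _ a1))/allP/(_ _ (mem01 _ b1)).
move=> /allP/(_ _ (memi _ _ j4))/allP/(_ _ (memi _ _ j'4)).
by move=> /allP/(_ _ (memi _ _ i05))/allP/(_ _ (memi _ _ j05))/implyP; apply.
Qed.

Lemma four_coloring_inj (R : realType) (T : seq (tetra R)) col kk :
  four_coloring T col -> kk < size T ->
  injective (fun k => col (nth (dflt_tetra R) T kk k)).
Proof.
move=> Hcol HkT a b E; case: (eqVneq a b) => // Hab.
by move: (Hcol kk HkT a b Hab); rewrite E eqxx.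
Qed.

Section Extrusion.
Local Open Scope ring_scope.
Variable R : realType.
Variables (col : pt3 R -> 'I_4) (s : nat -> R) (M : nat).
Hypothesis s_lt : forall i, (i < M)%N -> s i < s i.+1.

Definition label_point (K : tetra R) (l : nat * nat) : pt4 R :=
  psi (s l.1) (colvert col K (inord l.2)).

Definition extruded (K : tetra R) (i j : nat) (P : pentatope R) : Prop :=
  forall r : 'I_5, P r = label_point K (vertex_label i j r).

Definition mesh_pentatope (P : pentatope R) (i j : nat) : Prop :=
  [/\ (i < M)%N, (j < 4)%N &
      exists2 K, injective (fun k => col (K k)) & extruded K i j P].

Lemma nth_prism_split K i j : (j < 4)%N ->
  extruded K i j (nth (dflt_pent R) (prism_split col s K i) j).
Proof.
move=> j4 r; rewrite /label_point /vertex_label.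
case: j j4 => [|[|[|[|?]]]] // _; ord5_cases r;
  by rewrite /prism_split /= mk5_inord //= inordK //= ?addn0 ?addn1.
Qed.

Lemma nth_extrude T k : four_coloring T col -> (k < size (extrude T col s M))%N ->
  exists i j, mesh_pentatope (nth (dflt_pent R) (extrude T col s M) k) i j.
Proof.
rewrite /extrude => Hcol /(nth_flatten_lt (dflt_pent R)) [a [b [Ha Hb ->]]].
rewrite size_map in Ha; rewrite (nth_map (dflt_tetra R)) // in Hb *.
move: Hb => /(nth_flatten_lt (dflt_pent R)) [c [d [Hc Hd ->]]].
rewrite size_map size_iota in Hc.
rewrite (nth_map 0%N) ?size_iota // nth_iota // add0n in Hd *.
exists c, d; split=> //; exists (nth (dflt_tetra R) T a).
  exact: four_coloring_inj.
exact: nth_prism_split.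
Qed.

Lemma colvert_color (K : tetra R) X :
  injective (fun k => col (K k)) -> col (colvert col K X) = X.
Proof.
move=> Kinj; have /codomP [k Hk] := injF_onto Kinj X.
by rewrite /colvert; case: pickP => [k' /eqP //|/(_ k)]; rewrite /= -Hk eqxx.
Qed.

Lemma psi_time (a : R) v : psi a v ord0 (inord 3) = a.
Proof. by rewrite mxE inordK. Qed.

Lemma psi_inj (a b : R) v w : psi a v = psi b w -> a = b /\ v = w.
Proof.
move=> E; split; first by rewrite -(psi_time a v) -(psi_time b w) E.
apply/rowP => c; have := congr1 (fun m : pt4 R => m ord0 (widen_ord (leqnSn 3) c)) E.
by rewrite !mxE /= ltn_eqF // inord_val.
Qed.

Lemma s_homo_lt : {in [pred n | (n <= M)%N] &, {homo s : a b / (a < b)%N >-> a < b}}.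
Proof.
apply: Order.NatMonotonyTheory.homo_ltn_lt_in => [a b _ bM c /andP [_ cb]|a _].
  by rewrite inE (leq_trans (ltnW cb)).
exact: s_lt.
Qed.

Lemma label_point_inj (K K' : tetra R) l l' :
  injective (fun k => col (K k)) -> injective (fun k => col (K' k)) ->
  (l.1 <= M)%N -> (l'.1 <= M)%N -> (l.2 < 4)%N -> (l'.2 < 4)%N ->
  label_point K l = label_point K' l' -> l = l'.
Proof.
case: l l' => [t c] [t' c'] /= Kinj K'inj tM t'M c4 c'4 /psi_inj [Es /(congr1 col)].
rewrite !colvert_color // => /(congr1 val); rewrite /= !inordK // => ->.
congr pair; case: (ltngtP t t') => // [tt'|t't].
  by have := s_homo_lt tM t'M tt'; rewrite Es ltxx.
by have := s_homo_lt t'M tM t't; rewrite Es ltxx.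
Qed.

Lemma mesh_vertex_label P P' i i' j j' r r' :
  mesh_pentatope P i j -> mesh_pentatope P' i' j' ->
  P r = P' r' -> vertex_label i j r = vertex_label i' j' r'.
Proof.
case=> iM j4 [K Kinj HP] [i'M j'4 [K' K'inj HP']]; rewrite HP HP'.
have [t1 c1] := vertex_label_lt i j4 (ltn_ord r).
have [t2 c2] := vertex_label_lt i' j'4 (ltn_ord r').
by apply: label_point_inj => //; [exact: leq_trans t1 iM | exact: leq_trans t2 i'M].
Qed.

Lemma mesh_pentatope_inj P i j : mesh_pentatope P i j -> injective P.
Proof.
move=> HP r r' /(mesh_vertex_label HP HP) /vertex_label_inj E.
by case: HP => _ j4 _; apply: ord_inj; apply: E.
Qed.

Lemma mesh_edge_time P i j : mesh_pentatope P i j ->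
  (P (inord 0) + P (inord 4)) ord0 (inord 3) = s i + s i.+1.
Proof.
case=> _ j4 [K _ HP]; have [E0 E4] := vertex_label_edge i j4.
by rewrite mxE !HP !inordK // E0 E4 /label_point /= !psi_time.
Qed.

Lemma mesh_edge_neq P P' i i' j j' :
  mesh_pentatope P i j -> mesh_pentatope P' i' j' -> i != i' ->
  P' (inord 0) + P' (inord 4) <> P (inord 0) + P (inord 4).
Proof.
move=> HP HP' Hii' /(congr1 (fun m : pt4 R => m ord0 (inord 3))).
rewrite (mesh_edge_time HP) (mesh_edge_time HP'); apply/eqP.
have lt_edge a b : (a < b)%N -> (b < M)%N -> s a + s a.+1 < s b + s b.+1.
  move=> ab bM; have aM := ltn_trans ab bM.
  by rewrite ltrD // s_homo_lt // inE ltnW.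
case: HP HP' => iM _ _ [i'M _ _]; case: (ltngtP i i') Hii' => // lt _.
  by rewrite gt_eqF // lt_edge.
by rewrite lt_eqF // lt_edge.
Qed.

Lemma shared_face_vertex P P' i i' j j' (i0 j0 : 'I_5) :
  mesh_pentatope P i j -> mesh_pentatope P' i' j' ->
  (forall r, r != i0 -> exists2 r', r' != j0 & P r = P' r') ->
  forall r r' : 'I_5, r != i0 -> vertex_label i j r = vertex_label i' j' r' -> P r = P' r'.
Proof.
move=> HP HP' face r r' Hr Er; have [r'' _ E] := face r Hr.
suff -> : r' = r'' by [].
have [_ j'4 _] := HP'; apply: ord_inj; apply: (vertex_label_inj (i := i') j'4).
by rewrite -Er; apply: mesh_vertex_label E.
Qed.

Lemma shared_face_labels_match P P' i i' j j' (i0 j0 : 'I_5) :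
  mesh_pentatope P i j -> mesh_pentatope P' i' j' ->
  (forall r, r != i0 -> exists2 r', r' != j0 & P r = P' r') ->
  labels_match i j i' j' i0 j0.
Proof.
move=> HP HP' face; apply/allP => r; rewrite mem_iota add0n => /andP [_ r5].
apply/orP; case: (eqVneq r i0) => [|Hr]; [by left | right].
have [r' Hr' E] := face (Ordinal r5) Hr.
apply/hasP; exists (val r'); first by rewrite mem_iota ltn_ord.
by rewrite Hr' (mesh_vertex_label HP HP' E) eqxx.
Qed.

Lemma consistently_tagged_mesh P P' i i' j j' :
  mesh_pentatope P i j -> mesh_pentatope P' i' j' ->
  share_hyperface (P, 0%N) (P', 0%N) -> consistently_tagged (P, 0%N) (P', 0%N).
Proof.
move=> HP HP' [i0 [j0 [Hface /= Hneq]]].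
have face r : r != i0 -> exists2 r', r' != j0 & P r = P' r'.
  by move=> Hr; have [r' [? ?]] := (Hface (P r)).1 (ex_intro _ r (conj Hr erefl)); exists r'.
have face_eq := shared_face_vertex HP HP' face.
have iP := mesh_pentatope_inj HP; have iP' := mesh_pentatope_inj HP'.
have [_ j4 _] := HP; have [_ j'4 _] := HP'.
have Hmatch := shared_face_labels_match HP HP' face.
case/or3P: (labels_match_cases j4 j'4 (ltn_ord i0) (ltn_ord j0) Hmatch).
- case/andP => /eqP /ord_inj Ej0 /allP Hagree; subst j0.
  apply: (consistently_tagged_agree 0 (q := i0)) => // [r Hr|]; last by move/esym.
  have r5 : val r \in iota 0 5 by rewrite mem_iota ltn_ord.
  have /orP [/eqP /ord_inj Er|/eqP E] := Hagree _ r5.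
    by rewrite Er eqxx in Hr.
  exact/esym/face_eq.
- case/and4P => Hii' /eqP i00 /eqP j04 /allP Hshift.
  have Ei0 : i0 = inord 0 by apply: ord_inj; rewrite inordK.
  have Ej0 : j0 = inord 4 by apply: ord_inj; rewrite inordK.
  subst i0 j0; apply: consistently_tagged_shift => // [r r4||]; last first.
  + exact: mesh_edge_neq HP HP' Hii'.
  + by move/esym.
  apply/esym/face_eq; first by rewrite inord5_eq.
  by rewrite !inordK ?ltnS ?(ltnW r4) //; apply/eqP/Hshift; rewrite mem_iota.
case/and4P => Hii' /eqP i04 /eqP j00 /allP Hshift.
have Ei0 : i0 = inord 4 by apply: ord_inj; rewrite inordK.
have Ej0 : j0 = inord 0 by apply: ord_inj; rewrite inordK.
subst i0 j0; apply/consistently_tagged_sym/consistently_tagged_shift => // [r r4|].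
  apply: face_eq; first by rewrite inord5_eq ?ltn_eqF // ltnW.
  by rewrite !inordK ?ltnS ?(ltnW r4) //; apply/esym/eqP/Hshift; rewrite mem_iota.
by apply: (mesh_edge_neq HP' HP); rewrite eq_sym.
Qed.

End Extrusion.

Theorem proposition1 (R : realType) (T : seq (tetra R)) (col : pt3 R -> 'I_4)
  (M : nat) (s : nat -> R) :
  conforming_mesh T ->
  four_coloring T col ->
  (forall i, (i < M)%N -> (s i < s i.+1)%R) ->
  consistent_tagging (extrude T col s M).
Proof.
move=> _ Hcol s_lt.
exists (fun k => (nth (dflt_pent R) (extrude T col s M) k, 0%N)); split.
  by move=> k _; split=> //; exists 1%g => r; rewrite perm1.
move=> k l Hk Hl Hsh.
have [i [j HP]] := nth_extrude Hcol Hk.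
have [i' [j' HP']] := nth_extrude Hcol Hl.
exact: (consistently_tagged_mesh s_lt HP HP' Hsh).
Qed.
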